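(* Let $E$ be a real Hilbert space with $\dim(E)\ge2$, $h\in E$ a unit vector, and $f:\mathbb{R}_{\ge0}\to\mathbb{R}_{\ge0}$ with $f(d)=0$ iff $d=0$. Let $x\preceq_f y\iff f(\|y_\perp-x_\perp\|)\le y_h-x_h$. Then the relation $\preceq_f$ is topologically closed in $E\times E$ if and only if $f$ is lower semicontinuous.
   Context: For $x\in E$ write $x=x_h h+x_\perp$ with $x_h=(x,h)$ and $x_\perp$ orthogonal to $h$. *)

From HB Require Import structures.
From mathcomp Require Import all_boot all_order all_algebra.
From mathcomp Require Import all_classical all_reals all_analysis.
Set Implicit Arguments. Unset Strict Implicit. Unset Printing Implicit Defensive.
Import Order.TTheory GRing.Theory Num.Theory.
Import numFieldNormedType.Exports.
Local Open Scope classical_set_scope.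
Local Open Scope ring_scope.

(* ip is a real inner product on the normed space E inducing its norm.
   Together with completeness of E this makes E a real Hilbert space. *)
Definition is_inner_product {R : realType} {E : normedModType R}
  (ip : E -> E -> R) : Prop :=
  [/\ (forall x y, ip x y = ip y x),
      (forall (a : R) x y z, ip (a *: x + y) z = a * ip x z + ip y z)
    & (forall x, `|x| = Num.sqrt (ip x x))].

Definition dim_ge2 {R : realType} {E : normedModType R} : Prop :=
  exists u v : E, forall a b : R, a *: u + b *: v = 0 -> a = 0 /\ b = 0.

Definition comp_h {R : realType} {E : normedModType R}
  (ip : E -> E -> R) (h x : E) : R := ip x h.
Definition comp_perp {R : realType} {E : normedModType R}
  (ip : E -> E -> R) (h x : E) : E := x - (ip x h) *: h.

Definition prec_f {R : realType} {E : normedModType R}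
  (ip : E -> E -> R) (h : E) (f : R -> R) (x y : E) : Prop :=
  f `|comp_perp ip h y - comp_perp ip h x| <= comp_h ip h y - comp_h ip h x.

(* lower semicontinuity of f : R_{>=0} -> R (subspace topology on [0,oo)) *)
Definition lsc_nonneg {R : realType} (f : R -> R) : Prop :=
  forall d : R, 0 <= d -> forall t : R, t < f d ->
    \forall e \near d, 0 <= e -> t < f e.

From HB Require Import structures.
From mathcomp Require Import all_boot all_order all_algebra.
From mathcomp Require Import all_classical all_reals all_analysis.
From mathcomp Require Import lra.
Set Implicit Arguments. Unset Strict Implicit. Unset Printing Implicit Defensive.
Import Order.TTheory GRing.Theory Num.Theory.
Import numFieldNormedType.Exports.
Local Open Scope classical_set_scope.
Local Open Scope ring_scope.

(* The relation is the sublevel set [f (g p) <= k p] of the continuous maps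
   [g p = |p.2_perp - p.1_perp| >= 0] and [k p = p.2_h - p.1_h], hence closed
   when f is lower semicontinuous.  Conversely, for a unit vector u orthogonal
   to h, the line [e |-> (0, e u + t h)] pulls the relation back to the
   sublevel set [{e | f |e| <= t}], so closedness of the relation makes every
   such sublevel set closed, which is lower semicontinuity of f on [0, oo). *)

Section InnerProduct.
Variables (R : realType) (E : normedModType R) (ip : E -> E -> R).
Hypothesis ip_inner : is_inner_product ip.

Lemma ipC x y : ip x y = ip y x.
Proof. by case: ip_inner. Qed.

Lemma ipDl x y z : ip (x + y) z = ip x z + ip y z.
Proof. by case: ip_inner => _ lin _; have := lin 1 x y z; rewrite scale1r mul1r. Qed.

Lemma ip0l z : ip 0 z = 0.
Proof. by apply: (@addrI _ (ip 0 z)); rewrite -ipDl !addr0. Qed.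

Lemma ipZl a x z : ip (a *: x) z = a * ip x z.
Proof. by case: ip_inner => _ lin _; have := lin a x 0 z; rewrite !addr0 ip0l addr0. Qed.

Lemma ipBl x y z : ip (x - y) z = ip x z - ip y z.
Proof. by rewrite ipDl -scaleN1r ipZl mulN1r. Qed.

Lemma ipBr x y z : ip z (x - y) = ip z x - ip z y.
Proof. by rewrite ipC ipBl !(ipC z). Qed.

Lemma ipZr a x z : ip z (a *: x) = a * ip z x.
Proof. by rewrite ipC ipZl ipC. Qed.

Lemma ipxx_ge0 x : 0 <= ip x x.
Proof.
case: ip_inner => _ _ norm_ip; rewrite leNgt; apply/negP => ip_lt0.
have /normr0_eq0 x0 : `|x| = 0 by rewrite norm_ip; apply/eqP; rewrite sqrtr_eq0 ltW.
by move: ip_lt0; rewrite x0 ip0l ltxx.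
Qed.

Lemma sqr_norm_ip x : `|x| ^+ 2 = ip x x.
Proof. by case: ip_inner => _ _ ->; rewrite sqr_sqrtr // ipxx_ge0. Qed.

Variable h : E.
Hypothesis h_unit : `|h| = 1.

Lemma ip_hh : ip h h = 1.
Proof. by rewrite -sqr_norm_ip h_unit expr1n. Qed.

Lemma norm_ip_unit_le x : `|ip x h| <= `|x|.
Proof.
set c := ip x h.
have := ipxx_ge0 (x - c *: h).
rewrite !ipBl !ipBr !ipZl !ipZr ip_hh (ipC h x) -/c -sqr_norm_ip => ge0.
have c2 : `|c| ^+ 2 = c ^+ 2 by rewrite real_normK // num_real.
have : `|c| ^+ 2 <= `|x| ^+ 2 by rewrite c2; lra.
by rewrite ler_pXn2r // nnegrE.
Qed.

Lemma continuous_comp_h : continuous (comp_h ip h).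
Proof.
move=> x; apply/cvgrPdist_lt => e e0.
near=> y; rewrite /comp_h -ipBl.
apply: le_lt_trans (norm_ip_unit_le _) _; near: y.
exact: cvgr_dist_lt.
Unshelve. all: by end_near.
Qed.

Lemma continuous_comp_perp : continuous (comp_perp ip h).
Proof.
move=> x; apply: cvgB; first exact: cvg_id.
apply: cvgZr_tmp; exact: continuous_comp_h.
Qed.

Lemma exists_unit_orthogonal : @dim_ge2 R E -> exists u : E, `|u| = 1 /\ ip u h = 0.
Proof.
move=> [u0 [v0 indep]].
have perp_orth x : ip (comp_perp ip h x) h = 0.
  by rewrite ipBl ipZl ip_hh mulr1 subrr.
have normalize w : w != 0 -> ip w h = 0 -> exists u : E, `|u| = 1 /\ ip u h = 0.
  move=> w0 wh; exists (`|w|^-1 *: w); split; last by rewrite ipZl wh mulr0.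
  by rewrite normrZ normrV ?unitfE ?normr_eq0 // normr_id mulVf // normr_eq0.
have [eu|] := eqVneq (comp_perp ip h u0) 0; last by move/normalize; apply; apply: perp_orth.
have [ev|] := eqVneq (comp_perp ip h v0) 0; last by move/normalize; apply; apply: perp_orth.
move/eqP: eu; rewrite subr_eq0 => /eqP eu; move/eqP: ev; rewrite subr_eq0 => /eqP ev.
set a := ip u0 h in eu; set b := ip v0 h in ev.
have [_ a0] : b = 0 /\ - a = 0.
  by apply: indep; rewrite eu ev !scalerA mulrC mulNr scaleNr subrr.
have u00 : u0 = 0 by rewrite eu -[a]opprK a0 oppr0 scale0r.
have [] := indep 1 0; first by rewrite u00 scaler0 scale0r addr0.
by move=> /eqP; rewrite oner_eq0.
Qed.

Lemma prec_f_origin_line (f : R -> R) u e t : `|u| = 1 -> ip u h = 0 ->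
  prec_f ip h f 0 (e *: u + t *: h) <-> f `|e| <= t.
Proof.
move=> u_unit uh.
rewrite /prec_f /comp_perp /comp_h ipDl !ipZl uh ip_hh ip0l.
by rewrite mulr0 add0r mulr1 scale0r !subr0 addrK normrZ u_unit mulr1.
Qed.

End InnerProduct.

Section LowerSemicontinuity.
Variables (R : realType) (f : R -> R).

Lemma lsc_nonneg_closed_sublevel :
  (forall t, closed [set e : R | f `|e| <= t]) -> lsc_nonneg f.
Proof.
move=> sublevel_closed d d0 t t_lt.
have gt_near : nbhs d (~` [set e : R | f `|e| <= t]).
  move: (closed_openC (sublevel_closed t)); rewrite openE; apply.
  by apply/negP; rewrite -ltNge ger0_norm.
apply: filterS gt_near => e /= /negP + e0.
by rewrite -ltNge ger0_norm.
Qed.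

Lemma closed_lsc_comp_le (T : topologicalType) (g k : T -> R) :
  lsc_nonneg f -> continuous g -> (forall p, 0 <= g p) -> continuous k ->
  closed [set p | f (g p) <= k p].
Proof.
move=> f_lsc g_cont g_ge0 k_cont; rewrite -openC openE => p /= /negP; rewrite -ltNge.
set t := (k p + f (g p)) / 2 => k_lt_f.
have f_gt : \forall q \near p, 0 <= g q -> t < f (g q).
  exact: g_cont p _ (f_lsc _ (g_ge0 p) t ltac:(rewrite /t; lra)).
have k_lt : \forall q \near p, k q < t by apply: cvgr_lt (k_cont p) _ _; rewrite /t; lra.
apply: filterS (filterI k_lt f_gt) => q [kq fq] /=; apply/negP.
by rewrite -ltNge (lt_trans kq (fq (g_ge0 q))).
Qed.

End LowerSemicontinuity.

Theorem mainTheorem14 (R : realType) (E : completeNormedModType R)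
  (ip : E -> E -> R) (h : E) (f : R -> R) :
  is_inner_product ip ->
  @dim_ge2 R E ->
  `|h| = 1 ->
  (forall d : R, 0 <= d -> 0 <= f d) ->
  (forall d : R, 0 <= d -> (f d = 0 <-> d = 0)) ->
  (closed [set p : E * E | prec_f ip h f p.1 p.2] <-> lsc_nonneg f).
Proof.
move=> ip_inner dim2 h_unit _ _.
split => [prec_closed | f_lsc].
- apply: lsc_nonneg_closed_sublevel => t.
  have [u [u_unit uh]] := exists_unit_orthogonal ip_inner h_unit dim2.
  have line_cont : continuous (fun e : R => (0 : E, e *: u + t *: h)).
    move=> e; apply: cvg_pair; first exact: cvg_cst.
    by apply: cvgD; [apply: cvgZr_tmp; exact: cvg_id | exact: cvg_cst].
  have -> : [set e : R | f `|e| <= t] =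
      (fun e : R => (0 : E, e *: u + t *: h)) @^-1` [set p | prec_f ip h f p.1 p.2].
    by apply/seteqP; split => e /=; rewrite prec_f_origin_line.
  exact: (continuous_closedP _).1 line_cont _ prec_closed.
- have perp_cont := continuous_comp_perp ip_inner h_unit.
  have h_cont := continuous_comp_h ip_inner h_unit.
  apply: (@closed_lsc_comp_le _ f _
    (fun p => `|comp_perp ip h p.2 - comp_perp ip h p.1|)
    (fun p => comp_h ip h p.2 - comp_h ip h p.1)) => // p.
  + apply: cvg_norm; apply: cvgB; apply: continuous_comp;
      by [exact: cvg_snd | exact: cvg_fst | exact: perp_cont].
  + apply: cvgB; apply: continuous_comp;
      by [exact: cvg_snd | exact: cvg_fst | exact: h_cont].
Qed.
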